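(* Let $\Omega\subset\mathbb{R}^3$ be a MAC compatible bounded domain and $\mathcal D=(\mathcal M,\mathcal E)$ a MAC grid of $\Omega$. For $i,j\in\{1,2,3\}$ define $\mathcal R^{(i,j)}_{\mathcal E}:H^{(i)}_{\mathcal E,0}\to H^{(j)}_{\mathcal E,0}$ by $\mathcal R^{(i,j)}_{\mathcal E}v=\sum_{\sigma\in\mathcal E^{(j)}_{\rm int}}(\mathcal R^{(i,j)}_{\mathcal E}v)_\sigma\mathbb 1_{D_\sigma}$, where $(\mathcal R^{(i,i)}_{\mathcal E}v)_\sigma=v_\sigma$ and, for $j\neq i$ and $\sigma=K|L\in\mathcal E^{(j)}_{\rm int}$, $(\mathcal R^{(i,j)}_{\mathcal E}v)_\sigma=\frac14\sum_{\sigma'\in\mathcal N_\sigma}v_{\sigma'}$ with $\mathcal N_\sigma=\{\sigma'\in\mathcal E^{(i)}:\sigma'\in\mathcal E(K)\cup\mathcal E(L)\}$. For $i\in\{1,2,3\}$ define $\mathcal R^{(i)}_{\mathcal M}:H^{(i)}_{\mathcal E}\to L_{\mathcal M}$ by $(\mathcal R^{(i)}_{\mathcal M}v)_K=\frac12\sum_{\sigma\in\mathcal E^{(i)}\cap\mathcal E(K)}v_\sigma$ on each $K$. Then there exists $C\ge0$, depending only on $\eta_{\mathcal M}$ and non-increasing with respect to it, such that for all $1\le q<\infty$ and all $i,j\in\{1,2,3\}$: $\|\mathcal R^{(i,j)}_{\mathcal E}v\|_{L^q(\Omega)}\le C\|v\|_{L^q(\Omega)}$ for all $v\in H^{(i)}_{\mathcal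 E,0}$, and $\|\mathcal R^{(i)}_{\mathcal M}v\|_{L^q(\Omega)}\le C\|v\|_{L^q(\Omega)}$ for all $v\in H^{(i)}_{\mathcal E}$.
   Context: MAC compatible domain: bounded connected open $\Omega$ whose closure is a finite union of closed rectangular parallelepipeds with faces orthogonal to the canonical basis $\boldsymbol e_1,\boldsymbol e_2,\boldsymbol e_3$. MAC grid: $\mathcal M$ a structured partition of $\Omega$ into rectangular parallelepipeds $K$; $\mathcal E$ the set of faces, $\mathcal E(K)$ the faces of $K$, $\mathcal E^{(i)}$ the faces orthogonal to $\boldsymbol e_i$ ($\mathcal E^{(i)}_{\rm int}$ interior ones); $\sigma=K|L$ the common face of $K,L$; $D_{K,\sigma}$ the half of $K$ adjacent to $\sigma$, dual cell $D_\sigma=D_{K,\sigma}\cup D_{L,\sigma}$ for $\sigma=K|L$, $D_\sigma=D_{K,\sigma}$ for boundary $\sigma$. $\boldsymbol x_\sigma$ mass centre of $\sigma$; $h_{\mathcal M}=\max_K\operatorname{diam}K$; $\eta_{\mathcal M}=\frac1{h_{\mathcal M}}\min_K\min_i\{|\boldsymbol x_\sigma-\boldsymbol x_{\sigma'}|:\sigma\ne\sigma'\in\mathcal E^{(i)}\cap\mathcal E(K)\}$. $L_{\mathcal M}$: functions constant on each cell. $H^{(i)}_{\mathcal E}$: functions constant on each $D_\sigma$, $\sigma\in\mathcal E^{(i)}$ (value $v_\sigma$); $H^{(i)}_{\mathcal E,0}$: those with $v_\sigma=0$ for boundary faces $\sigma$. *)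

From HB Require Import structures.
From mathcomp Require Import all_boot all_order all_algebra.
From mathcomp Require Import all_classical all_reals.
From mathcomp Require Import topology normedtype exp.
Set Implicit Arguments. Unset Strict Implicit. Unset Printing Implicit Defensive.
Import Order.TTheory GRing.Theory Num.Theory.
Import numFieldNormedType.Exports.
Local Open Scope classical_set_scope.
Local Open Scope ring_scope.

(* Raw data of a Cartesian (structured) grid in R^3 together with the set  *)
(* of its active cells.  Grid lines in direction k (k : 'I_3) are the      *)
(* reals  pts k 0 < pts k 1 < ... < pts k N.  A cell index (and a face     *)
(* index) is a triple K : 'I_3 -> 'I_N.+1 ; the cell K is the closed box   *)
(*   prod_k [pts k (K k), pts k (K k).+1].                                 *)
(* A face orthogonal to e_i is given by the pair (i, f); it is the set     *)
(*   { x | x_i = pts i (f i), x_k in [pts k (f k), pts k (f k).+1], k<>i }. *)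
Record mesh (R : realType) := Mesh {
  N : nat;
  pts : 'I_3 -> nat -> R;
  active : {set {ffun 'I_3 -> 'I_N.+1}}
}.

Definition cellT (R : realType) (G : mesh R) := {ffun 'I_3 -> 'I_(N G).+1}.

Section MAC.
Variables (R : realType) (G : mesh R).
Local Notation cell := (cellT G).

Definition cellbox (K : cell) : set 'rV[R]_3 :=
  [set x | forall k : 'I_3, pts G k (K k) <= x ord0 k <= pts G k (K k).+1].

Definition Omega : set 'rV[R]_3 :=
  interior (\bigcup_(K in [set K | K \in active G]) cellbox K).

Definition is_MAC_grid : Prop :=
  [/\ forall (k : 'I_3) (n : nat), (n < N G)%N -> pts G k n < pts G k n.+1,
      forall K, K \in active G -> forall k, (K k < N G)%N,
      Omega !=set0 & connected Omega].

Definition width (k : 'I_3) (K : cell) : R := pts G k (K k).+1 - pts G k (K k).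
Definition vol (K : cell) : R := \prod_(k < 3) width k K.

(* faceOf i f K : the face (i,f), orthogonal to e_i, belongs to E(K) *)
Definition faceOf (i : 'I_3) (f K : cell) : bool :=
  [forall k, (k != i) ==> (f k == K k)] &&
  ((f i == K i :> nat) || (f i == (K i).+1 :> nat)).

Definition inE (i : 'I_3) (f : cell) : bool :=
  [exists K in active G, faceOf i f K].

Definition inEint (i : 'I_3) (f : cell) : bool :=
  [exists K in active G, [exists L in active G,
     [&& K != L, faceOf i f K & faceOf i f L]]].

(* |D_sigma| : sum of the measures of the half cells D_{K,sigma} *)
Definition dualvol (i : 'I_3) (f : cell) : R :=
  \sum_(K in active G | faceOf i f K) vol K / 2.

(* discrete functions: v : cell -> R, v f = v_sigma for sigma = (i,f).
   H^(i)_{E,0} : vanishing on boundary faces *)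
Definition in_H0 (i : 'I_3) (v : cell -> R) : Prop :=
  forall f, inE i f -> ~~ inEint i f -> v f = 0.

(* L^q(Omega) norm of  sum_{sigma in E^(i)} v_sigma 1_{D_sigma} *)
Definition normE (i : 'I_3) (q : R) (v : cell -> R) : R :=
  (\sum_(f | inE i f) dualvol i f * (`|v f| `^ q)) `^ q^-1.

(* L^q(Omega) norm of  sum_{K in M} u_K 1_K *)
Definition normM (q : R) (u : cell -> R) : R :=
  (\sum_(K in active G) vol K * (`|u K| `^ q)) `^ q^-1.

Definition Rij (i j : 'I_3) (v : cell -> R) : cell -> R := fun s =>
  if inEint j s then
    (if i == j then v s
     else 4^-1 * \sum_(s' | [exists K in active G, faceOf j s K && faceOf i s' K])
                    v s')
  else 0.

Definition RM (i : 'I_3) (v : cell -> R) : cell -> R := fun K =>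
  2^-1 * \sum_(s | faceOf i s K) v s.

Definition dist3 (a b : 'I_3 -> R) : R := Num.sqrt (\sum_(k < 3) (a k - b k) ^+ 2).

(* mass centre x_sigma of the face sigma = (i,f) *)
Definition xface (i : 'I_3) (f : cell) : 'I_3 -> R := fun k =>
  if k == i then pts G k (f k) else (pts G k (f k) + pts G k (f k).+1) / 2.

Definition diam (K : cell) : R :=
  dist3 (fun k => pts G k (K k)) (fun k => pts G k (K k).+1).

Definition hM : R := \big[Num.max/0]_(K in active G) diam K.

(* eta_M = (1/h_M) min_K min_i { |x_s - x_s'| : s <> s' in E^(i) cap E(K) }
   (the default value hM of the iterated min is never reached, since
    every such distance is <= diam K <= hM) *)
Definition etaM : R :=
  (\big[Num.min/hM]_(K in active G) \big[Num.min/hM]_(i < 3)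
     \big[Num.min/hM]_(s | faceOf i s K) \big[Num.min/hM]_(s' | faceOf i s' K && (s != s'))
        dist3 (xface i s) (xface i s')) / hM.

End MAC.

Arguments cellbox {R} G K.
Arguments Omega {R} G.
Arguments is_MAC_grid {R} G.
Arguments width {R} G k K.
Arguments vol {R} G K.
Arguments faceOf {R} G i f K.
Arguments inE {R} G i f.
Arguments inEint {R} G i f.
Arguments dualvol {R} G i f.
Arguments in_H0 {R} G i v.
Arguments normE {R} G i q v.
Arguments normM {R} G q u.
Arguments Rij {R} G i j v.
Arguments RM {R} G i v.
Arguments xface {R} G i f.
Arguments diam {R} G K.
Arguments hM {R} G.
Arguments etaM {R} G.

(* Each of the averaging operators takes means of at most four values of v
   on faces of the cells adjacent to a face (or of a cell), so the q-th power
   of an averaged value is bounded by the sum of the q-th powers of the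
   values averaged.  Summing against the volumes of the dual cells and
   exchanging the order of summation, every cell is counted at most twice,
   and the volume of a dual cell is at most |K| / eta_M for each cell K it
   meets: two neighbouring cells share all widths but one, and every width
   lies between eta_M h_M and h_M.  Hence ||R v||_q^q <= (4 / eta_M) ||v||_q^q,
   and C(eta) = 4 / eta works. *)

From Pilot Require Import Defs.
From HB Require Import structures.
From mathcomp Require Import all_boot all_order all_algebra.
From mathcomp Require Import all_classical all_reals.
From mathcomp Require Import topology normedtype exp.
From mathcomp Require Import zify ring.
Set Implicit Arguments. Unset Strict Implicit. Unset Printing Implicit Defensive.
Import Order.TTheory GRing.Theory Num.Theory.
Local Open Scope ring_scope.

Section PowerSums.
Variable R : realType.

Lemma sum_le_card_mul (T : finType) (P : pred T) (x : T -> R) (c : R) (n : nat) :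
  0 <= c -> (#|[pred t | P t]| <= n)%N -> (forall t, P t -> x t <= c) ->
  \sum_(t | P t) x t <= n%:R * c.
Proof.
move=> c0 hn hx; apply: le_trans (ler_sum _ hx) _.
by rewrite sumr_const -[_ *+ _]mulr_natl ler_wpM2r // ler_nat.
Qed.

Lemma sum_powR_le (T : finType) (P : pred T) (x : T -> R) (q : R) (n : nat) :
  1 <= q -> (forall t, 0 <= x t) -> (#|[pred t | P t]| <= n)%N ->
  (\sum_(t | P t) x t) `^ q <= n%:R `^ q * \sum_(t | P t) x t `^ q.
Proof.
move=> q1 x0 hn; have q0 : q != 0 by rewrite gt_eqF // (lt_le_trans _ q1).
set M := \big[Num.max/0]_(t | P t) x t.
have [M0 HM] : 0 <= M /\ M `^ q <= \sum_(t | P t) x t `^ q.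
  apply: (big_ind2 (fun m s => 0 <= m /\ m `^ q <= s)) => [|a1 a2 b1 b2 [a0 ha] [b0 hb]|t _].
  - by rewrite powR0.
  - have a20 := le_trans (powR_ge0 _ _) ha; have b20 := le_trans (powR_ge0 _ _) hb.
    split; first by rewrite le_max a0.
    by have [_|_] := leP a1 b1; [rewrite (le_trans hb) // lerDr | rewrite (le_trans ha) // lerDl].
  - by [].
have Hs : \sum_(t | P t) x t <= n%:R * M.
  by apply: sum_le_card_mul => // t Pt; exact: le_bigmax_cond.
apply: (@le_trans _ _ ((n%:R * M) `^ q)).
  apply: ge0_ler_powR => //; first exact: le_trans ler01 q1.
  - by rewrite nnegrE sumr_ge0.
  - by rewrite nnegrE mulr_ge0.
by rewrite powRM // ler_wpM2l // powR_ge0.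
Qed.

Lemma powR_invr_le (q S1 S2 c : R) : 0 < q -> 0 <= S1 -> 0 <= S2 -> 0 <= c ->
  S1 <= c `^ q * S2 -> S1 `^ q^-1 <= c * S2 `^ q^-1.
Proof.
move=> q0 S10 S20 c0 H.
apply: (@le_trans _ _ ((c `^ q * S2) `^ q^-1)).
  apply: ge0_ler_powR => //; first by rewrite invr_ge0 ltW.
  by rewrite nnegrE mulr_ge0 ?powR_ge0.
by rewrite powRM ?powR_ge0 // -powRrM mulfV ?gt_eqF // powRr1.
Qed.

End PowerSums.

Section Mesh.
Variables (R : realType) (G : mesh R).
Local Notation cell := (cellT G).

Lemma faceOfP i (f K : cell) : faceOf G i f K ->
  (forall k, k != i -> f k = K k) /\ (f i = K i :> nat \/ f i = (K i).+1 :> nat).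
Proof.
case/andP => /forallP H /orP H2; split.
  by move=> k kn; exact/eqP/(implyP (H k) kn).
by case: H2 => /eqP; auto.
Qed.

Lemma ffun_eq_off i (f g : cell) :
  (forall k, k != i -> f k = g k) -> f i = g i :> nat -> f = g.
Proof.
move=> off on; apply/ffunP => k.
by case: (eqVneq k i) => [->|kn]; [exact: val_inj | exact: off].
Qed.

Lemma card_faceOf i (K : cell) : (#|[pred s : cell | faceOf G i s K]| <= 2)%N.
Proof.
apply: (leq_trans _ (eq_leq card_bool)).
apply: (leq_card_in (fun s : cell => s i == K i :> nat)).
move=> s s'; rewrite !inE => /faceOfP[h1 h2] /faceOfP[h1' h2'] /= e.
apply: (ffun_eq_off (i := i)) => [k kn|]; first by rewrite h1 // h1'.
by move: e; case: h2 => ->; case: h2' => -> //; rewrite eqxx; lia.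
Qed.

Lemma card_cells_faceOf j (s : cell) : (#|[pred K : cell | faceOf G j s K]| <= 2)%N.
Proof.
apply: (leq_trans _ (eq_leq card_bool)).
apply: (leq_card_in (fun K : cell => s j == K j :> nat)).
move=> K K'; rewrite !inE => /faceOfP[h1 h2] /faceOfP[h1' h2'] /= e.
apply: (ffun_eq_off (i := j)) => [k kn|]; first by rewrite -h1 // h1'.
by move: e; case: h2 => h; case: h2' => h'; rewrite h in h' *; rewrite h' ?eqxx; lia.
Qed.

Lemma card_active_faceOf j (s : cell) :
  (#|[pred K : cell | (K \in active G) && faceOf G j s K]| <= 2)%N.
Proof.
apply: leq_trans (card_cells_faceOf j s); apply: subset_leq_card.
by apply/fintype.subsetP => K; rewrite !inE => /andP[].
Qed.

Lemma sum_cells_faces i (a : cell -> R) :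
  \sum_(K in active G) \sum_(s | faceOf G i s K) vol G K * a s =
  2 * \sum_(s | Defs.inE G i s) dualvol G i s * a s.
Proof.
rewrite (exchange_big_dep (Defs.inE G i)) /=; last first.
  by move=> K s KA fs; apply/existsP; exists K; rewrite KA fs.
rewrite mulr_sumr; apply: eq_bigr => s _.
by rewrite -mulr_suml /dualvol -mulr_suml mulrA [2 * _]mulrC divfK ?pnatr_eq0.
Qed.

Lemma sum_faces_cells_le j (F : cell -> R) : (forall K, K \in active G -> 0 <= F K) ->
  \sum_(s | Defs.inE G j s) \sum_(K | (K \in active G) && faceOf G j s K) F K <=
  2 * \sum_(K in active G) F K.
Proof.
move=> F0; rewrite (exchange_big_dep (fun K => K \in active G)) /=; last first.
  by move=> s K _ /andP[].
rewrite mulr_sumr; apply: ler_sum => K KA.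
apply: sum_le_card_mul => //; first exact: F0.
apply: leq_trans (card_faceOf j K); apply: subset_leq_card.
by apply/fintype.subsetP => s; rewrite !inE => /andP[_ /andP[]].
Qed.

Lemma norm_sum_neighbours_le i j (v : cell -> R) s :
  `|\sum_(s' | [exists K in active G, faceOf G j s K && faceOf G i s' K]) v s'| <=
  \sum_(K | (K \in active G) && faceOf G j s K) \sum_(s' | faceOf G i s' K) `|v s'|.
Proof.
apply: le_trans (ler_norm_sum _ _ _) _.
rewrite (exchange_big_dep
   (fun s' => [exists K in active G, faceOf G j s K && faceOf G i s' K])) /=; last first.
  by move=> K s' /andP[KA fj] fi; apply/existsP; exists K; rewrite KA fj fi.
apply: ler_sum => s' /existsP[K /andP[KA /andP[fj fi]]].
by rewrite (bigD1 K) /= ?KA ?fj ?fi // lerDl sumr_ge0.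
Qed.

Definition sumqE i q (v : cell -> R) := \sum_(s | Defs.inE G i s) dualvol G i s * `|v s| `^ q.
Definition sumqM q (u : cell -> R) := \sum_(K in active G) vol G K * `|u K| `^ q.

Lemma normEE i q v : normE G i q v = sumqE i q v `^ q^-1. Proof. by []. Qed.
Lemma normME q u : normM G q u = sumqM q u `^ q^-1. Proof. by []. Qed.

Hypothesis HG : is_MAC_grid G.

Lemma width_gt0 (K : cell) k : K \in active G -> 0 < width G k K.
Proof. by case: HG => Hpts Hact _ _ KA; rewrite subr_gt0 Hpts ?Hact. Qed.

Lemma vol_gt0 (K : cell) : K \in active G -> 0 < vol G K.
Proof. by move=> KA; apply: prodr_gt0 => k _; exact: width_gt0. Qed.

Lemma dualvol_ge0 i (s : cell) : 0 <= dualvol G i s.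
Proof.
by apply: sumr_ge0 => K /andP[KA _]; rewrite divr_ge0 // ltW // vol_gt0.
Qed.

Lemma width_le_hM (K : cell) k : K \in active G -> width G k K <= hM G.
Proof.
move=> KA; apply: le_trans (le_bigmax_cond _ _ KA); have w0 := ltW (width_gt0 k KA).
rewrite /diam /dist3 -(ger0_norm w0) -sqrtr_sqr ler_sqrt; last first.
  by apply: sumr_ge0 => l _; exact: sqr_ge0.
rewrite (bigD1 k) //= -[X in X <= _]addr0 lerD ?sumr_ge0 // => [|l _].
  by rewrite /width -opprB sqrrN.
exact: sqr_ge0.
Qed.

Lemma active_neq0 : exists K : cell, K \in active G.
Proof. by case: HG => _ _ [x /interior_subset [K KA _]] _; exists K. Qed.

Lemma hM_gt0 : 0 < hM G.
Proof.
have [K KA] := active_neq0.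
exact: lt_le_trans (width_gt0 ord0 KA) (width_le_hM ord0 KA).
Qed.

Lemma dist3_xface (K : cell) i s s' : K \in active G ->
  faceOf G i s K -> faceOf G i s' K -> s != s' ->
  dist3 (xface G i s) (xface G i s') = width G i K.
Proof.
move=> KA fs fs' ne; have w0 := ltW (width_gt0 i KA).
have [h1 h2] := faceOfP fs; have [h1' h2'] := faceOfP fs'.
rewrite /dist3 (bigD1 i) //= big1 ?addr0 => [|k kn]; last first.
  by rewrite /xface (negbTE kn) h1 // h1' // subrr expr0n.
have neq : s i != s' i :> nat.
  by apply: contra ne => /eqP e; apply/eqP/(ffun_eq_off (i := i)) => // k kn; rewrite h1 // h1'.
rewrite /xface eqxx; move: neq.
case: h2 => ->; case: h2' => -> //; rewrite ?eqxx // => _.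
  by rewrite /width -opprB sqrrN sqrtr_sqr ger0_norm.
by rewrite /width sqrtr_sqr ger0_norm.
Qed.

Lemma etaM_gt0 : 0 < etaM G.
Proof.
have hM0 := hM_gt0; rewrite divr_gt0 //.
apply: lt_bigmin => // K KA; apply: lt_bigmin => // i _.
apply: lt_bigmin => // s fs; apply: lt_bigmin => // s' /andP[fs' ne].
by rewrite (dist3_xface KA fs fs' ne) width_gt0.
Qed.

(* [etaM G * hM G] is a minimum of face distances, among which that of the two
   faces of [K] orthogonal to [e_k]. *)
Lemma etaM_hM_le_width (K : cell) k : K \in active G -> etaM G * hM G <= width G k K.
Proof.
move=> KA; rewrite divfK ?gt_eqF ?hM_gt0 //.
have Kk : (K k < N G)%N by case: HG => _ Hact _ _; exact: Hact.
pose s' : cell := [ffun l => if l == k then inord (K k).+1 else K l].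
have fK : faceOf G k K K.
  by apply/andP; split; [apply/forallP => l; apply/implyP | rewrite eqxx].
have fs' : faceOf G k s' K.
  apply/andP; split; first by apply/forallP => l; apply/implyP => ln; rewrite ffunE (negbTE ln).
  by rewrite ffunE eqxx inordK ?eqxx ?orbT.
have ne : K != s'.
  apply/eqP => /ffunP/(_ k); rewrite ffunE eqxx => /(congr1 val).
  by rewrite /= inordK ?ltnS //; lia.
rewrite -(dist3_xface KA fK fs' ne).
have fKs' : faceOf G k s' K && (K != s') by rewrite fs' ne.
eapply le_trans; first exact: (bigmin_le_cond _ _ KA).
eapply le_trans; first exact: (bigmin_le _ k _).
eapply le_trans; first exact: (@bigmin_le_cond _ _ _ _ K (fun s => faceOf G k s K) _ fK).
exact: (@bigmin_le_cond _ _ _ _ s' (fun s => faceOf G k s K && (K != s)) _ fKs').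
Qed.

Lemma etaM_le1 : etaM G <= 1.
Proof.
have [K KA] := active_neq0.
have := le_trans (etaM_hM_le_width ord0 KA) (width_le_hM ord0 KA).
by rewrite -{2}(mul1r (hM G)) ler_pM2r // hM_gt0.
Qed.

(* Neighbours across a face orthogonal to [e_j] differ only in their [j]-th width. *)
Lemma vol_le_etaM j (s K L : cell) : K \in active G -> L \in active G ->
  faceOf G j s K -> faceOf G j s L -> vol G L <= (etaM G)^-1 * vol G K.
Proof.
move=> KA LA /faceOfP[hK _] /faceOfP[hL _].
have hv : vol G L * width G j K = vol G K * width G j L.
  have hp : \prod_(k < 3 | k != j) width G k L = \prod_(k < 3 | k != j) width G k K.
    by apply: eq_bigr => k kn; rewrite /width -hL // hK.
  by rewrite /vol (bigD1 j) //= [in RHS](bigD1 j) //= hp; ring.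
rewrite ler_pdivlMl ?etaM_gt0 // -(ler_pM2l hM_gt0) mulrA [hM G * _]mulrC.
apply: le_trans (_ : width G j K * vol G L <= _).
  by rewrite ler_wpM2r ?etaM_hM_le_width // ltW // vol_gt0.
by rewrite mulrC hv [hM G * _]mulrC ler_wpM2l ?width_le_hM // ltW // vol_gt0.
Qed.

Lemma dualvol_le_etaM j (s K : cell) : K \in active G -> faceOf G j s K ->
  dualvol G j s <= (etaM G)^-1 * vol G K.
Proof.
move=> KA fK; apply: (@le_trans _ _ (2%:R * ((etaM G)^-1 * vol G K / 2))).
  apply: sum_le_card_mul => [||L /andP[LA fL]].
  - by rewrite divr_ge0 // mulr_ge0 // ?invr_ge0 ltW // ?etaM_gt0 ?vol_gt0.
  - exact: card_active_faceOf.
  - by rewrite ler_pM2r ?invr_gt0 // (vol_le_etaM KA LA fK fL).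
by rewrite mulrC divfK ?pnatr_eq0.
Qed.

Variables (q : R) (q1 : 1 <= q).

Let q_gt0 : 0 < q. Proof. exact: lt_le_trans ltr01 q1. Qed.

Lemma sumqE_ge0 i v : 0 <= sumqE i q v.
Proof. by apply: sumr_ge0 => s _; rewrite mulr_ge0 ?dualvol_ge0 ?powR_ge0. Qed.

Lemma sumqM_ge0 u : 0 <= sumqM q u.
Proof. by apply: sumr_ge0 => K KA; rewrite mulr_ge0 ?powR_ge0 // ltW ?vol_gt0. Qed.

Lemma ler_powRq (x y : R) : 0 <= x -> x <= y -> x `^ q <= y `^ q.
Proof.
move=> x0 xy; apply: ge0_ler_powR => //; first exact: ltW.
by rewrite nnegrE (le_trans x0 xy).
Qed.

Lemma powR_RM_le i v K : `|RM G i v K| `^ q <= \sum_(s | faceOf G i s K) `|v s| `^ q.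
Proof.
rewrite /RM normrM ger0_norm ?invr_ge0 //.
apply: (@le_trans _ _ ((2^-1 * \sum_(s | faceOf G i s K) `|v s|) `^ q)).
  by apply: ler_powRq; rewrite ?mulr_ge0 ?invr_ge0 // ler_wpM2l ?invr_ge0 // ler_norm_sum.
rewrite powRM ?invr_ge0 ?sumr_ge0 //.
apply: le_trans (ler_wpM2l (powR_ge0 _ _) (sum_powR_le q1 _ (card_faceOf i K))) _ => //.
by rewrite mulrA -powRM ?invr_ge0 // mulVf ?pnatr_eq0 // powR1 mul1r.
Qed.

Lemma powR_Rij_le i j v s : i != j ->
  `|Rij G i j v s| `^ q <=
  \sum_(K | (K \in active G) && faceOf G j s K) \sum_(s' | faceOf G i s' K) `|v s'| `^ q.
Proof.
move=> ij; rewrite /Rij (negbTE ij); case: ifP => _; last first.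
  by rewrite normr0 powR0 ?gt_eqF //; do 2![apply: sumr_ge0 => ? _]; exact: powR_ge0.
rewrite normrM ger0_norm ?invr_ge0 //.
apply: le_trans (_ : (4^-1 * \sum_(K | (K \in active G) && faceOf G j s K)
                      \sum_(s' | faceOf G i s' K) `|v s'|) `^ q <= _).
  by apply: ler_powRq; rewrite ?mulr_ge0 ?invr_ge0 // ler_wpM2l ?invr_ge0 // norm_sum_neighbours_le.
rewrite powRM ?invr_ge0 //; last by do 2![apply: sumr_ge0 => ? _].
apply: le_trans (ler_wpM2l (powR_ge0 _ _)
  (sum_powR_le q1 (fun K => sumr_ge0 _ _) (card_active_faceOf j s))) _ => //.
have inner : \sum_(K | (K \in active G) && faceOf G j s K) (\sum_(s' | faceOf G i s' K) `|v s'|) `^ q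
    <= 2%:R `^ q * \sum_(K | (K \in active G) && faceOf G j s K)
                     \sum_(s' | faceOf G i s' K) `|v s'| `^ q.
  rewrite mulr_sumr; apply: ler_sum => K _.
  exact: sum_powR_le q1 _ (card_faceOf i K).
apply: le_trans (ler_wpM2l (powR_ge0 _ _) (ler_wpM2l (powR_ge0 _ _) inner)) _.
(* At most [2 * 2] pairs [(K, s')] contribute, which the factor [4^-1] offsets. *)
rewrite !mulrA -!powRM ?mulr_ge0 ?invr_ge0 //.
by rewrite -mulrA -natrM mulVf ?pnatr_eq0 // powR1 mul1r.
Qed.

Lemma sumqE_Rii_le i v : sumqE i q (Rij G i i v) <= sumqE i q v.
Proof.
apply: ler_sum => s _; rewrite ler_wpM2l ?dualvol_ge0 // /Rij eqxx.
by case: ifP => _ //; rewrite normr0 powR0 ?gt_eqF ?powR_ge0.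
Qed.

Lemma sumqE_Rij_le i j v : i != j ->
  sumqE j q (Rij G i j v) <= 4 / etaM G * sumqE i q v.
Proof.
move=> ij; pose F K := (etaM G)^-1 * \sum_(s' | faceOf G i s' K) vol G K * `|v s'| `^ q.
apply: (@le_trans _ _
  (\sum_(s | Defs.inE G j s) \sum_(K | (K \in active G) && faceOf G j s K) F K)).
  apply: ler_sum => s _.
  apply: le_trans (ler_wpM2l (dualvol_ge0 _ _) (powR_Rij_le v s ij)) _.
  rewrite mulr_sumr; apply: ler_sum => K /andP[KA fK].
  rewrite /F -mulr_sumr mulrA ler_wpM2r ?dualvol_le_etaM //.
  by apply: sumr_ge0 => s' _; exact: powR_ge0.
apply: le_trans (sum_faces_cells_le _ _) _.
  move=> K KA; rewrite /F mulr_ge0 ?invr_ge0 ?(ltW etaM_gt0) //.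
  by apply: sumr_ge0 => s' _; rewrite mulr_ge0 ?powR_ge0 // ltW ?vol_gt0.
rewrite -mulr_sumr sum_cells_faces le_eqVlt; apply/orP; left; apply/eqP.
by rewrite /sumqE; ring.
Qed.

Lemma sumqM_RM_le i v : sumqM q (RM G i v) <= 2 * sumqE i q v.
Proof.
rewrite -sum_cells_faces; apply: ler_sum => K KA.
by rewrite -mulr_sumr ler_wpM2l ?powR_RM_le // ltW ?vol_gt0.
Qed.

Lemma normE_Rij_le i j v : normE G j q (Rij G i j v) <= 4 / etaM G * normE G i q v.
Proof.
have ge1 : 1 <= 4 / etaM G.
  by rewrite ler_pdivlMr ?etaM_gt0 // mul1r (le_trans etaM_le1) // ler1n.
rewrite !normEE; apply: powR_invr_le; rewrite ?sumqE_ge0 ?(le_trans ler01 ge1) //.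
apply: (@le_trans _ _ (4 / etaM G * sumqE i q v)); last first.
  by rewrite ler_wpM2r ?sumqE_ge0 ?le1r_powR.
have [<-|ij] := eqVneq i j; last exact: sumqE_Rij_le.
exact: le_trans (sumqE_Rii_le i v) (ler_peMl (sumqE_ge0 _ _) ge1).
Qed.

Lemma normM_RM_le i v : normM G q (RM G i v) <= 2 * normE G i q v.
Proof.
rewrite normME normEE; apply: powR_invr_le; rewrite ?sumqM_ge0 ?sumqE_ge0 //.
apply: le_trans (sumqM_RM_le i v) _.
by rewrite ler_wpM2r ?sumqE_ge0 ?le1r_powR ?ler1n.
Qed.

End Mesh.

Theorem lemma7p1 (R : realType) :
  exists C : R -> R,
    (forall e : R, 0 <= C e) /\
    (forall e1 e2 : R, 0 < e1 -> e1 <= e2 -> C e2 <= C e1) /\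
    (forall (G : mesh R), is_MAC_grid G ->
     forall q : R, 1 <= q ->
     forall i j : 'I_3,
       (forall v : cellT G -> R, in_H0 G i v ->
          normE G j q (Rij G i j v) <= C (etaM G) * normE G i q v) /\
       (forall v : cellT G -> R,
          normM G q (RM G i v) <= C (etaM G) * normE G i q v)).
Proof.
exists (fun e => 4 / `|e|); split; first by move=> e; rewrite divr_ge0.
split.
  move=> e1 e2 e1_gt0 le12; have e2_gt0 := lt_le_trans e1_gt0 le12.
  by rewrite !gtr0_norm // ler_pM2l // lef_pV2.
move=> G HG q q1 i j; rewrite gtr0_norm ?etaM_gt0 //.
(* The bound on [Rij] holds for every [v], boundary values included. *)
split=> [v _|v]; first exact: normE_Rij_le.
apply: le_trans (normM_RM_le HG q1 i v) _.
rewrite ler_wpM2r ?powR_ge0 // ler_pdivlMr ?etaM_gt0 //.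
by apply: le_trans (ler_wpM2l _ (etaM_le1 HG)) _; rewrite ?mulr1 ?ler_nat.
Qed.
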